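(* Let $k\geqslant 1$ be an integer. For $l=(l_1,\ldots,l_k)\in(\mathbb R_{>0})^k$, let $S_l$ be the nondecreasing sequence obtained by taking the union (with multiplicity) of the $k$ sequences $T_i=\{d/l_i\}_{d=1}^\infty$, $i=1,\ldots,k$, and reordering the entries in nondecreasing order; write $S_l[d]$ for the $d$-th entry of $S_l$ (indexing from $1$), and $|l|=l_1+\ldots+l_k$. Then for every $d\in\mathbb N=\{1,2,\ldots\}$, $$\sup_{l\in(\mathbb R_{>0})^k}|l|\,S_l[d]=d+k-1.$$ *)

From HB Require Import structures.
From mathcomp Require Import all_boot all_order all_algebra.
From mathcomp Require Import all_classical all_reals ereal.
Set Implicit Arguments. Unset Strict Implicit. Unset Printing Implicit Defensive.
Import Order.TTheory GRing.Theory Num.Theory.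
Local Open Scope ring_scope.
Local Open Scope classical_set_scope.

(* For t >= 0, the number of entries of T_i that are <= t is
   #{ m >= 1 | m / l_i <= t } = floor (t * l_i)  (l_i > 0),
   so the number of entries of S_l that are <= t is the following sum. *)
Definition nentries_le (R : realType) (k : nat) (l : 'I_k -> R) (t : R) : int :=
  \sum_(i < k) Num.floor (t * l i).

(* S_l[d] (1-indexed): the d-th entry of the nondecreasing rearrangement of
   S_l, i.e. the least t >= 0 such that at least d entries of S_l are <= t
   (standard order statistic; the infimum is attained). *)
Definition Sl (R : realType) (k : nat) (l : 'I_k -> R) (d : nat) : R :=
  inf [set t : R | 0 <= t /\ (d%:Z <= nentries_le l t)%R].

Definition lsum (R : realType) (k : nat) (l : 'I_k -> R) : R := \sum_(i < k) l i.

From HB Require Import structures.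
From mathcomp Require Import all_boot all_order all_algebra.
From mathcomp Require Import all_classical all_reals ereal.
From mathcomp Require Import lra zify.
Import Order.TTheory GRing.Theory Num.Theory.
Local Open Scope ring_scope.
Local Open Scope classical_set_scope.

(* Each of the k floors loses less than 1, so at level t there are more than
   t |l| - k entries; at t = (d + k - 1) / |l| this already gives d entries,
   whence |l| S_l[d] <= d + k - 1.  Equality is attained by l = (d, 1, ..., 1):
   below level 1 the i-th sequence contributes at most l_i - 1 entries, i.e.
   d - 1 in total, while at level 1 there are d + k - 1 of them, so S_l[d] = 1. *)

Section OrderStatistic.
Variables (R : realType) (k : nat).
Implicit Types (l : 'I_k -> R) (d : nat) (t : R).

Lemma nentries_le_gt (k_gt0 : (0 < k)%N) l t :
  t * lsum l - k%:R < (nentries_le l t)%:~R.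
Proof.
rewrite /nentries_le /lsum rmorph_sum mulr_sumr.
have -> : (k%:R : R) = \sum_(i < k) 1 by rewrite sumr_const card_ord.
rewrite -sumrB; apply: ltr_sum => [|i _].
  by apply/hasP; exists (Ordinal k_gt0); rewrite ?mem_index_enum.
by have := floorD1_gt (t * l i); rewrite intrD; lra.
Qed.

Lemma Sl_le l d t : 0 <= t -> d%:Z <= nentries_le l t -> Sl l d <= t.
Proof. by move=> t_ge0 enough_t; apply: ge_inf => //; exists 0 => y []. Qed.

Lemma Sl_eq l d t : 0 <= t -> d%:Z <= nentries_le l t ->
  (forall y, 0 <= y -> y < t -> nentries_le l y < d%:Z) -> Sl l d = t.
Proof.
move=> t_ge0 enough_t few_below; apply/le_anti; rewrite Sl_le //=.
apply: lb_le_inf => [|y [y_ge0 enough_y]]; first by exists t.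
by rewrite leNgt; apply: contraTN enough_y => /(few_below _ y_ge0); rewrite -ltNge.
Qed.

Lemma lsum_gt0 (k_gt0 : (0 < k)%N) {l} : (forall i, 0 < l i) -> 0 < lsum l.
Proof.
move=> l_gt0; rewrite /lsum (bigD1 (Ordinal k_gt0)) //= ltr_pwDl //.
by apply: sumr_ge0 => i _; apply: ltW.
Qed.

Lemma lsum_mul_Sl_le (k_gt0 : (0 < k)%N) d l : (0 < d)%N -> (forall i, 0 < l i) ->
  lsum l * Sl l d <= (d + k - 1)%:R.
Proof.
move=> d_gt0 l_gt0; have lsum_gt0 := lsum_gt0 k_gt0 l_gt0.
pose t := (d + k - 1)%:R / lsum l.
have t_lsum : t * lsum l = (d + k - 1)%:R by rewrite divfK ?gt_eqF.
have enough_t : d%:Z <= nentries_le l t.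
  have := nentries_le_gt k_gt0 l t.
  rewrite t_lsum natrB ?addn_gt0 ?d_gt0 // natrD => many_t.
  have : (d%:Z - 1)%:~R < (nentries_le l t)%:~R :> R by rewrite intrB; lra.
  by rewrite ltr_int; lia.
rewrite -ler_pdivlMl // mulrC -/t; apply: Sl_le enough_t.
by rewrite divr_ge0 // ltW.
Qed.

End OrderStatistic.

Section IntegerWeights.
Variables (R : realType) (k : nat) (n : 'I_k -> nat).
Hypothesis n_gt0 : forall i, (0 < n i)%N.

Let l : 'I_k -> R := fun i => (n i)%:R.

Lemma nentries_le_nat1 : nentries_le l 1 = (\sum_(i < k) n i)%N%:Z.
Proof.
rewrite /nentries_le -natz natr_sum; apply: eq_bigr => i _.
by rewrite /l mul1r pmulrn intrKfloor natz.
Qed.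

Lemma nentries_le_nat_lt1 {y} : 0 <= y -> y < 1 ->
  nentries_le l y <= (\sum_(i < k) n i)%N%:Z - k%:Z.
Proof.
move=> y_ge0 y_lt1.
have -> : k%:Z = \sum_(i < k) 1 by rewrite sumr_const card_ord natz.
rewrite -natz natr_sum -sumrB; apply: ler_sum => i _; rewrite natz.
suff : Num.floor (y * l i) < (n i)%:Z by rewrite -ltzD1 subrK.
have n_pos : (0 : R) < (n i)%:R by rewrite ltr0n.
by rewrite floor_lt_int /l; nra.
Qed.

Lemma Sl_nat d : ((\sum_(i < k) n i) - k < d <= \sum_(i < k) n i)%N -> Sl l d = 1.
Proof.
move=> /andP[d_gt d_le]; apply: Sl_eq => // [|y y_ge0 y_lt1].
  by rewrite nentries_le_nat1 lez_nat.
apply: le_lt_trans (nentries_le_nat_lt1 y_ge0 y_lt1) _; lia.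
Qed.

End IntegerWeights.

Definition spike {k : nat} (d : nat) (i : 'I_k) : nat := if val i == 0%N then d else 1.

Lemma spike_gt0 k d (i : 'I_k) : (0 < d)%N -> (0 < spike d i)%N.
Proof. by rewrite /spike; case: ifP. Qed.

Lemma sum_spike k d : (0 < k)%N -> (\sum_(i < k) spike d i = d + k - 1)%N.
Proof.
move=> k_gt0; rewrite (bigD1 (Ordinal k_gt0)) //= {1}/spike /=.
rewrite (eq_bigr (fun _ => 1%N)) => [|i]; last first.
  by rewrite /spike -val_eqE /= => /negbTE ->.
by rewrite sum1_card cardC1 card_ord -subn1 addnBA.
Qed.

Theorem proposition5 (R : realType) (k d : nat) (hk : (1 <= k)%N) (hd : (1 <= d)%N) :
  ereal_sup [set ((lsum l * Sl l d)%:E : \bar R) | l in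
              [set l : 'I_k -> R | forall i, 0 < l i]]
  = ((d + k - 1)%:R : R)%:E.
Proof.
apply/le_anti/andP; split.
  by apply: ge_ereal_sup => _ [l l_gt0 <-]; rewrite lee_fin lsum_mul_Sl_le.
apply: ereal_sup_ubound; exists (fun i => (spike d i)%:R) => [i|].
  by rewrite /= ltr0n spike_gt0.
rewrite Sl_nat => [|i|]; last by rewrite sum_spike //; lia.
- by rewrite mulr1 /lsum -natr_sum sum_spike.
- exact: spike_gt0.
Qed.
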